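(* There exist infinitely many pairs $(a,b)$ of integers such that (i) $a\ge 36$ and $a$ is even, and $b\ge 21$ and $b$ is odd; (ii) $3b(b-1)=a(a-1)$; and (iii) $b\le 7a/12$. *)

From Stdlib Require Import ZArith Ensembles Finite_sets.
Open Scope Z_scope.

(* The conditions (i)-(iii) on a pair (a,b) of integers.
   (iii) b <= 7a/12 over the rationals is written as 12*b <= 7*a. *)
Definition good_pair (a b : Z) : Prop :=
  (36 <= a /\ Z.Even a /\ 21 <= b /\ Z.Odd b) /\
  3 * b * (b - 1) = a * (a - 1) /\
  12 * b <= 7 * a.

Definition good_pairs : Ensemble (Z * Z) := fun p => good_pair (fst p) (snd p).

(* With x = 2a - 1 and y = 2b - 1 the equation 3b(b-1) = a(a-1) becomes the
   Pell-type equation x^2 - 3y^2 = -2, which is preserved by multiplication by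
   the unit 97 + 56 sqrt 3 = (2 + sqrt 3)^4.  In the variables (a, b) this is an
   affine map that also preserves the parities of a and b and strictly
   increases a, so its orbit through (36, 21) is an infinite set of solutions.
   Condition (iii) comes for free: a is about b sqrt 3 and 12/7 < sqrt 3. *)

From Stdlib Require Import ZArith Ensembles Finite_sets Lia.

Section UnboundedOrbit.

Variables (U : Type) (A : Ensemble U) (h : U -> Z).

Lemma finite_bounded_above :
  Finite U A -> exists M, forall x, In U A x -> h x <= M.
Proof.
  induction 1 as [|A _ [M HM] y _].
  - exists 0; intros x [].
  - exists (Z.max M (h y)); intros x [x' Hx' | x' []].
    + specialize (HM x' Hx'); lia.
    + lia.
Qed.

Lemma not_finite_of_increasing_closed (f : U -> U) (x0 : U) :
  In U A x0 -> (forall x, In U A x -> In U A (f x) /\ h x < h (f x)) ->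
  ~ Finite U A.
Proof.
  intros Hx0 Hf HA.
  assert (orbit : forall n, In U A (Nat.iter n f x0) /\
                         h x0 + Z.of_nat n <= h (Nat.iter n f x0)).
  { induction n as [|n [Hn Hle]]; simpl Nat.iter.
    - split; [exact Hx0 | lia].
    - destruct (Hf _ Hn) as [HS Hlt]; rewrite Nat2Z.inj_succ; split; [exact HS | lia]. }
  destruct (finite_bounded_above HA) as [M HM].
  destruct (orbit (Z.to_nat (M - h x0 + 1))) as [Hin Hle].
  specialize (HM _ Hin); lia.
Qed.

End UnboundedOrbit.

Definition pell_step (p : Z * Z) : Z * Z :=
  (97 * fst p + 168 * snd p - 132, 56 * fst p + 97 * snd p - 76).

Lemma pell_step_invariant (p : Z * Z) :
  let q := pell_step p in
  fst q * (fst q - 1) - 3 * snd q * (snd q - 1) =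
  fst p * (fst p - 1) - 3 * snd p * (snd p - 1).
Proof. destruct p as [a b]; unfold pell_step; cbn [fst snd]; ring. Qed.

(* The bound 36 <= a is sharp: equality holds at (a, b) = (36, 21). *)
Lemma solution_slope_bound (a b : Z) :
  36 <= a -> 0 <= b -> 3 * b * (b - 1) = a * (a - 1) -> 12 * b <= 7 * a.
Proof. intros; nia. Qed.

Lemma good_pairs_pell_step (p : Z * Z) :
  In _ good_pairs p -> In _ good_pairs (pell_step p).
Proof.
  pose proof (pell_step_invariant p) as Hinv.
  destruct p as [a b]; unfold In, good_pairs, good_pair, pell_step in *; cbn [fst snd] in *.
  intros [(Ha & [k Hk] & Hb & [m Hm]) [Heq _]].
  assert (Heq' : 3 * (56 * a + 97 * b - 76) * (56 * a + 97 * b - 76 - 1) =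
                 (97 * a + 168 * b - 132) * (97 * a + 168 * b - 132 - 1)) by lia.
  split; [|split; [exact Heq' | apply solution_slope_bound; [lia | lia | exact Heq']]].
  split; [lia|]; split; [exists (97 * k + 168 * m + 18); lia|].
  split; [lia | exists (56 * k + 97 * m + 10); lia].
Qed.

Theorem lemma4p4 : ~ Finite (Z * Z) good_pairs.
Proof.
  apply (not_finite_of_increasing_closed _ _ fst pell_step (36, 21)).
  - unfold In, good_pairs, good_pair; cbn [fst snd].
    split; [split; [lia | split; [exists 18 | split; [lia | exists 10]]] | split]; lia.
  - intros [a b] Hab; split; [exact (good_pairs_pell_step _ Hab)|].
    destruct Hab as [(? & _ & ? & _) _]; unfold pell_step; cbn [fst snd] in *; lia.
Qed.
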